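(* Let $G=G_+G_-$ be a unique factorization of a finite group $G$, let $\xi,\eta:G_+\to G_-$ be maps and $r:G_+\times G_+\to\mathbb R_{>0}$ a function such that \[ R=\sum_{u,v\in G_+} r(u,v)\,\{u(\eta(v)^{u})^{-1}\}\otimes\{v\,\xi(u)\} \] is a positive quasi-triangular structure on $H(G;G_+,G_-)$. Then $r(u,v)=1$ for all $u,v\in G_+$.
   Context: A unique factorization $G=G_+G_-$ consists of subgroups $G_+,G_-$ such that every $g\in G$ is uniquely $g=g_+g_-$ with $g_+\in G_+$, $g_-\in G_-$. For $u\in G_+$, $x\in G_-$ define ${}^u x\in G_-$, $u^x\in G_+$, ${}^x u\in G_+$, $x^u\in G_-$ by $ux=({}^u x)(u^x)$ and $xu=({}^x u)(x^u)$. $H(G;G_+,G_-)$ is the complex vector space with basis $\{g\}$, $g\in G$, and Hopf algebra structure: $\{g\}\{h\}=\delta_{g_+^{\,g_-},\,h_+}\{g h_-\}$; unit $1=\sum_{u\in G_+}\{u\}$; $\Delta\{g\}=\sum_{h\in G_+}\{g_+h^{-1}({}^{h}g_-)\}\otimes\{h g_-\}$; $\varepsilon\{g\}=\delta_{g_+,e}$; $S\{g\}=\{g^{-1}\}$. A quasi-triangular structure on a Hopf algebra $H$ is an invertible $R\in H\otimes H$ with $\tau\Delta(a)=R\Delta(a)R^{-1}$ for all $a$ ($\tau$ the flip), $(\Delta\otimes\mathrm{id})R=R_{13}R_{23}$, $(\mathrm{id}\otimes\Delta)R=R_{13}R_{12}$, and $(\varepsilon\otimes\mathrm{id})R=(\mathrm{id}\otimes\varepsilon)R=1$.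 An element of $H(G;G_+,G_-)^{\otimes 2}$ is positive if it is a linear combination of the $\{g\}\otimes\{h\}$ with non-negative real coefficients. *)

From HB Require Import structures.
From mathcomp Require Import all_boot all_order all_algebra all_fingroup.
Set Implicit Arguments. Unset Strict Implicit. Unset Printing Implicit Defensive.
Import Order.TTheory GRing.Theory Num.Theory.
Local Open Scope ring_scope.

(* The finite group G is the whole finGroupType gT; G_+ = Gp, G_- = Gm.
   Elements of H = H(G;G_+,G_-) are functions gT -> C (coefficients on the
   basis {g}); elements of H⊗H (resp. H⊗H⊗H) are functions on gT*gT
   (resp. gT*gT*gT). *)

Definition unique_factorization (gT : finGroupType) (Gp Gm : {group gT}) : Prop :=
  forall g : gT, exists! p : gT * gT,
    [/\ p.1 \in Gp, p.2 \in Gm & g = (p.1 * p.2)%g].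

Section Hopf.
Variables (gT : finGroupType) (C : numClosedFieldType) (Gp Gm : {group gT}).

Definition fact (g : gT) : gT * gT :=
  odflt (1, 1)%g [pick p : gT * gT | (p.1 \in Gp) && (p.2 \in Gm) && ((p.1 * p.2)%g == g)].
Definition pl (g : gT) : gT := (fact g).1.
Definition mi (g : gT) : gT := (fact g).2.

(* u x = (^u x)(u^x), with ^u x in G_-, u^x in G_+  (u in G_+, x in G_-) *)
Definition lact_m (u x : gT) : gT := ((mi ((u * x)^-1)%g)^-1)%g.
Definition ract_p (u x : gT) : gT := ((pl ((u * x)^-1)%g)^-1)%g.
(* x u = (^x u)(x^u), with ^x u in G_+, x^u in G_-  (x in G_-, u in G_+) *)
Definition lact_p (x u : gT) : gT := pl (x * u)%g.
Definition ract_m (x u : gT) : gT := mi (x * u)%g.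

Definition bas (g : gT) : gT -> C := fun k => (k == g)%:R.

(* structure constants: {g}{h} = delta_{g_+^{g_-}, h_+} {g h_-} *)
Definition mulc (g h k : gT) : C :=
  ((ract_p (pl g) (mi g) == pl h) && ((g * mi h)%g == k))%:R.

Definition Hmul (a b : gT -> C) : gT -> C :=
  fun k => \sum_(g : gT) \sum_(h : gT) a g * b h * mulc g h k.
Definition Hone : gT -> C := fun k => (k \in Gp)%:R.
Definition Hcomul (a : gT -> C) : gT * gT -> C :=
  fun p => \sum_(g : gT) a g *
     \sum_(h in Gp) ((p.1 == (pl g * h^-1 * lact_m h (mi g))%g)
                     && (p.2 == (h * mi g)%g))%:R.
Definition Hcounit (a : gT -> C) : C := \sum_(g : gT) a g * (pl g == 1%g)%:R.

Definition H2mul (X Y : gT * gT -> C) : gT * gT -> C :=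
  fun p => \sum_(q : gT * gT) \sum_(q' : gT * gT)
             X q * Y q' * mulc q.1 q'.1 p.1 * mulc q.2 q'.2 p.2.
Definition H2one : gT * gT -> C := fun p => Hone p.1 * Hone p.2.
Definition flip (X : gT * gT -> C) : gT * gT -> C := fun p => X (p.2, p.1).

(* H⊗H⊗H, triples written ((x, y), z) *)
Definition H3mul (X Y : gT * gT * gT -> C) : gT * gT * gT -> C :=
  fun p => \sum_(q : gT * gT * gT) \sum_(q' : gT * gT * gT)
             X q * Y q' * mulc q.1.1 q'.1.1 p.1.1 * mulc q.1.2 q'.1.2 p.1.2
               * mulc q.2 q'.2 p.2.
Definition leg12 (X : gT * gT -> C) : gT * gT * gT -> C :=
  fun p => X p.1 * Hone p.2.
Definition leg13 (X : gT * gT -> C) : gT * gT * gT -> C :=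
  fun p => X (p.1.1, p.2) * Hone p.1.2.
Definition leg23 (X : gT * gT -> C) : gT * gT * gT -> C :=
  fun p => Hone p.1.1 * X (p.1.2, p.2).
Definition comul_id (X : gT * gT -> C) : gT * gT * gT -> C :=
  fun p => \sum_(g : gT) X (g, p.2) * Hcomul (bas g) p.1.
Definition id_comul (X : gT * gT -> C) : gT * gT * gT -> C :=
  fun p => \sum_(h : gT) X (p.1.1, h) * Hcomul (bas h) (p.1.2, p.2).
Definition counit_id (X : gT * gT -> C) : gT -> C :=
  fun k => \sum_(g : gT) X (g, k) * Hcounit (bas g).
Definition id_counit (X : gT * gT -> C) : gT -> C :=
  fun k => \sum_(h : gT) X (k, h) * Hcounit (bas h).

Definition quasi_triangular (R : gT * gT -> C) : Prop :=
  [/\ exists Ri : gT * gT -> C, H2mul R Ri = H2one /\ H2mul Ri R = H2one,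
      forall (Ri : gT * gT -> C), H2mul R Ri = H2one -> H2mul Ri R = H2one ->
        forall a : gT -> C, flip (Hcomul a) = H2mul (H2mul R (Hcomul a)) Ri,
      comul_id R = H3mul (leg13 R) (leg23 R),
      id_comul R = H3mul (leg13 R) (leg12 R)
    & counit_id R = Hone /\ id_counit R = Hone].

Definition positive2 (R : gT * gT -> C) : Prop := forall p, 0 <= R p.

Definition Rform (xi eta : gT -> gT) (r : gT -> gT -> C) : gT * gT -> C :=
  fun p => \sum_(u in Gp) \sum_(v in Gp)
     r u v * ((p.1 == (u * (ract_m (eta v) u)^-1)%g)
              && (p.2 == (v * xi u)%g))%:R.

End Hopf.

(* Comparing the coefficients of (Delta (x) id) R = R13 R23 and of
   (id (x) Delta) R = R13 R12 on suitable basis tensors, where exactly one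
   term of the product survives, gives
     r(wh, v) = r(w, v) r(h, v^xi(w))   and   r(u, kh) = r(u, h) r(^eta(h) u, k).
   By the second identity, and since u |-> ^eta(h) u permutes G_+, the column
   products P(v) = prod_u r(u, v) form a homomorphism from G_+ to the
   positive reals, hence P = 1. Taking the product over h of the first
   identity then gives P(v) = r(w, v)^|G_+| P(v^xi(w)), so r(w, v) = 1. *)

From mathcomp Require Import all_boot all_order all_algebra all_fingroup.
Import Order.TTheory GRing.Theory Num.Theory.
Local Open Scope ring_scope.
Set Implicit Arguments. Unset Strict Implicit. Unset Printing Implicit Defensive.

Lemma boolr_neq0 (R : nzSemiRingType) (b : bool) : (b%:R != 0 :> R) = b.
Proof. by case: b; rewrite ?oner_neq0 ?eqxx. Qed.

Lemma reindex_in_inj {R : Type} {idx : R} {op : Monoid.com_law idx}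
    (I : finType) (A : {set I}) (s : I -> I) (F : I -> R) :
  {in A, forall x, s x \in A} -> {in A &, injective s} ->
  \big[op/idx]_(x in A) F x = \big[op/idx]_(x in A) F (s x).
Proof.
move=> sA s_inj; rewrite -(big_imset _ s_inj); apply: eq_bigl => y.
suff -> : s @: A = A by [].
apply/eqP; rewrite eqEcard card_in_imset // leqnn andbT.
by apply/subsetP => _ /imsetP[x Ax ->]; apply: sA.
Qed.

Lemma pos_morph_eq1 (gT : finGroupType) (R : numDomainType) (G : {group gT})
    (f : gT -> R) :
  {in G, forall x, 0 < f x} -> {in G &, forall x y, f (x * y)%g = f x * f y} ->
  {in G, forall x, f x = 1}.
Proof.
move=> f_gt0 fM.
have f1 : f 1%g = 1.
  apply: (mulfI (lt0r_neq0 (f_gt0 _ (group1 G)))).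
  by rewrite -fM ?mulg1 ?mulr1.
move=> x Gx; have fX n : f (x ^+ n)%g = f x ^+ n.
  by elim: n => [|n IHn]; rewrite ?f1 // expgSr fM ?groupX // IHn exprSr.
apply/eqP; rewrite -(pexpr_eq1 (order_gt0 x)) ?ltW ?f_gt0 //.
by rewrite -fX expg_order f1.
Qed.

Section Factorization.
Variables (gT : finGroupType) (Gp Gm : {group gT}).
Hypothesis uf : unique_factorization Gp Gm.

Local Notation pl := (pl Gp Gm).
Local Notation mi := (mi Gp Gm).
Local Notation ract_p := (ract_p Gp Gm).

Lemma fact_spec g : [/\ pl g \in Gp, mi g \in Gm & (pl g * mi g)%g = g].
Proof.
rewrite /pl /mi /fact; case: pickP => [p /andP[/andP[Gp_p Gm_p] /eqP] // | no_p].
have [p [[Gp_p Gm_p def_g] _]] := uf g.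
by have := no_p p; rewrite Gp_p Gm_p -def_g eqxx.
Qed.

Lemma pl_in g : pl g \in Gp. Proof. by case: (fact_spec g). Qed.
Lemma mi_in g : mi g \in Gm. Proof. by case: (fact_spec g). Qed.
Lemma mulg_pl_mi g : (pl g * mi g)%g = g. Proof. by case: (fact_spec g). Qed.

Lemma fact_mulg x y : x \in Gp -> y \in Gm -> pl (x * y)%g = x /\ mi (x * y)%g = y.
Proof.
move=> Gp_x Gm_y; have [p [_ uniq_xy]] := uf (x * y)%g.
have := uniq_xy (_, _) (And3 (pl_in _) (mi_in _) (esym (mulg_pl_mi (x * y)))).
by rewrite (uniq_xy (x, y)) // => -[].
Qed.

Lemma pl_mulg x y : x \in Gp -> y \in Gm -> pl (x * y)%g = x.
Proof. by move=> Gp_x Gm_y; case: (fact_mulg Gp_x Gm_y). Qed.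

Lemma mi_mulg x y : x \in Gp -> y \in Gm -> mi (x * y)%g = y.
Proof. by move=> Gp_x Gm_y; case: (fact_mulg Gp_x Gm_y). Qed.

Lemma pl_id x : x \in Gp -> pl x = x.
Proof. by move=> Gp_x; rewrite -[in LHS](mulg1 x) pl_mulg. Qed.

Lemma mi_id x : x \in Gp -> mi x = 1%g.
Proof. by move=> Gp_x; rewrite -[in LHS](mulg1 x) mi_mulg. Qed.

Lemma pl_mulGm (g y : gT) : y \in Gm -> pl (g * y)%g = pl g.
Proof.
move=> Gm_y; rewrite -{1}(mulg_pl_mi g) -mulgA pl_mulg ?pl_in //.
exact: groupM (mi_in g) Gm_y.
Qed.

Lemma GpGm_eq1 x : x \in Gp -> x \in Gm -> x = 1%g.
Proof. by move=> Gp_x Gm_x; rewrite -(mi_id Gp_x) -{2}[x]mul1g mi_mulg. Qed.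

Lemma ract_m_in x u : ract_m Gp Gm x u \in Gm. Proof. exact: mi_in. Qed.
Lemma lact_m_in u x : lact_m Gp Gm u x \in Gm. Proof. by rewrite groupV mi_in. Qed.
Lemma ract_p_in u x : ract_p u x \in Gp. Proof. by rewrite groupV pl_in. Qed.

Lemma lact_p_inj x : {in Gp &, injective (lact_p Gp Gm x)}.
Proof.
move=> u1 u2 Gp_u1 Gp_u2 eq_pl; apply/eqP; rewrite eq_mulVg1; apply/eqP.
apply: GpGm_eq1; first by rewrite groupM ?groupV.
have -> : (u1^-1 * u2 = (x * u1)^-1 * (x * u2))%g.
  by rewrite invMg -mulgA mulKg.
have eq_pl' : pl (x * u1) = pl (x * u2) := eq_pl.
rewrite -(mulg_pl_mi (x * u1)) -(mulg_pl_mi (x * u2)) eq_pl' invMg -mulgA mulKg.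
by rewrite groupM ?groupV ?mi_in.
Qed.

Definition twist g := ract_p (pl g) (mi g).

Lemma twist_mulg x y : x \in Gp -> y \in Gm -> twist (x * y)%g = ract_p x y.
Proof. by move=> Gp_x Gm_y; rewrite /twist pl_mulg ?mi_mulg. Qed.

Lemma twist_id u : u \in Gp -> twist u = u.
Proof.
move=> Gp_u; rewrite -[u in twist u]mulg1 twist_mulg //.
by rewrite /ract_p mulg1 pl_id ?invgK ?groupV.
Qed.

Definition mulb g h k := (twist g == pl h) && ((g * mi h)%g == k).

End Factorization.

Section Coproduct.
Variables (gT : finGroupType) (C : numClosedFieldType) (Gp Gm : {group gT}).
Hypothesis uf : unique_factorization Gp Gm.

Local Notation pl := (pl Gp Gm).
Local Notation mi := (mi Gp Gm).
Local Notation lact_m := (lact_m Gp Gm).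

(* Delta {g} = sum_(h in G_+) {(comul_pt g h).1} (x) {(comul_pt g h).2} *)
Definition comul_pt g h := ((pl g * h^-1 * lact_m h (mi g))%g, (h * mi g)%g).

Lemma comul_pt_inj g g' h h' : h \in Gp -> h' \in Gp ->
  comul_pt g h = comul_pt g' h' -> g = g' /\ h = h'.
Proof.
move=> Gp_h Gp_h' [eq1 eq2].
have eq_h : h = h' by have := congr1 pl eq2; rewrite !(pl_mulg uf) ?(mi_in uf).
move: eq1 eq2; rewrite -{}eq_h => eq1 /mulgI eq_mi; split=> //.
have := congr1 pl eq1.
rewrite !(pl_mulg uf) ?lact_m_in ?groupM ?groupV ?(pl_in uf) //.
by move/mulIg => eq_pl; rewrite -(mulg_pl_mi uf g) -(mulg_pl_mi uf g') eq_pl eq_mi.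
Qed.

Lemma Hcomul_bas g g0 h : h \in Gp ->
  Hcomul Gp Gm (bas C g) (comul_pt g0 h) = (g == g0)%:R.
Proof.
move=> Gp_h; rewrite /Hcomul (big_only1 g) // => [|g' neq_g' _]; last first.
  by rewrite /bas (negbTE neq_g') mul0r.
rewrite /bas eqxx mul1r.
under eq_bigr => h' _ do rewrite -xpair_eqE.
rewrite (big_only1 h) // => [|h' neq_h' Gp_h'].
  have [-> | neq_g] := eqVneq g g0; first by rewrite eqxx.
  by case: eqP => // /(comul_pt_inj Gp_h Gp_h)[eq_g _]; rewrite eq_g eqxx in neq_g.
apply/eqP; rewrite pnatr_eq0 eqb0; apply/eqP.
by move=> /(comul_pt_inj Gp_h Gp_h')[_ eq_h]; rewrite eq_h eqxx in neq_h'.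
Qed.

Lemma comul_id_comul_pt (X : gT * gT -> C) g h z : h \in Gp ->
  comul_id Gp Gm X (comul_pt g h, z) = X (g, z).
Proof.
move=> Gp_h; rewrite /comul_id (big_only1 g) ?Hcomul_bas ?eqxx ?mulr1 //.
move=> g' neq_g' _.
by rewrite Hcomul_bas // (negbTE neq_g') mulr0.
Qed.

Lemma id_comul_comul_pt (X : gT * gT -> C) x g h : h \in Gp ->
  id_comul Gp Gm X ((x, (comul_pt g h).1), (comul_pt g h).2) = X (x, g).
Proof.
move=> Gp_h; rewrite /id_comul (big_only1 g) /= -/(comul_pt g h) //.
  by rewrite Hcomul_bas ?eqxx ?mulr1.
by move=> g' neq_g' _; rewrite -/(comul_pt g h) Hcomul_bas // (negbTE neq_g') mulr0.
Qed.

Definition H3term (X Y : gT * gT * gT -> C) (p q q' : gT * gT * gT) : C :=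
  X q * Y q' * (mulb Gp Gm q.1.1 q'.1.1 p.1.1)%:R
    * (mulb Gp Gm q.1.2 q'.1.2 p.1.2)%:R * (mulb Gp Gm q.2 q'.2 p.2)%:R.

Lemma H3mul_only1 X Y p q0 q0' :
  (forall q q', H3term X Y p q q' != 0 -> q = q0 /\ q' = q0') ->
  H3mul Gp Gm X Y p = H3term X Y p q0 q0'.
Proof.
move=> supp; rewrite /H3mul (big_only1 q0) // => [|q neq_q _].
  rewrite (big_only1 q0') // => q' neq_q' _; apply/eqP; apply: contraR neq_q'.
  by case/supp=> _ ->.
apply: big1 => q' _; apply/eqP; apply: contraR neq_q.
by case/supp=> ->.
Qed.

Lemma H3term_neq0 X Y p q q' : H3term X Y p q q' != 0 ->
  [/\ H3term X Y p q q' = X q * Y q', X q * Y q' != 0,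
      mulb Gp Gm q.1.1 q'.1.1 p.1.1, mulb Gp Gm q.1.2 q'.1.2 p.1.2
    & mulb Gp Gm q.2 q'.2 p.2].
Proof.
rewrite /H3term.
case: (mulb _ _ _ _ p.1.1) (mulb _ _ _ _ p.1.2) (mulb _ _ _ _ p.2) => [] [] [] /=;
  by rewrite ?mulr1 ?mulr0 ?eqxx.
Qed.

End Coproduct.

Section Coefficients.
Variables (gT : finGroupType) (C : numClosedFieldType) (Gp Gm : {group gT}).
Hypothesis uf : unique_factorization Gp Gm.

Local Notation pl := (pl Gp Gm).
Local Notation comul_pt := (comul_pt Gp Gm).
Local Notation H3term := (H3term Gp Gm).

Variables (xi eta : gT -> gT) (r : gT -> gT -> C).
Hypothesis xi_in : {in Gp, forall u, xi u \in Gm}.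
Hypothesis eta_in : {in Gp, forall u, eta u \in Gm}.

Local Notation R := (Rform Gp Gm xi eta r).

Definition rleft u v := (u * (ract_m Gp Gm (eta v) u)^-1)%g.

Lemma pl_rleft u v : u \in Gp -> pl (rleft u v) = u.
Proof. by move=> Gp_u; rewrite (pl_mulg uf) ?groupV ?(ract_m_in uf). Qed.

Lemma twist_rleft u v : u \in Gp -> v \in Gp ->
  twist Gp Gm (rleft u v) = lact_p Gp Gm (eta v) u.
Proof.
move=> Gp_u Gp_v.
rewrite (twist_mulg uf) ?groupV ?(ract_m_in uf) // /ract_p invMg invgK.
have -> : ract_m Gp Gm (eta v) u = ((lact_p Gp Gm (eta v) u)^-1 * (eta v * u))%g.
  by rewrite -[in RHS](mulg_pl_mi uf (eta v * u)) mulKg.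
rewrite mulgA mulgK (pl_mulg uf) ?invgK ?groupV ?eta_in //.
exact: (pl_in uf).
Qed.

Lemma Rform_neq0 p : R p != 0 ->
  exists u v, [/\ u \in Gp, v \in Gp, p.1 = rleft u v & p.2 = (v * xi u)%g].
Proof.
move=> nz; have [|no_uv] := boolP [exists u in Gp, exists v in Gp,
  (p.1 == rleft u v) && (p.2 == v * xi u)%g].
  by case/exists_inP=> u Gp_u /exists_inP[v Gp_v /andP[/eqP p1 /eqP p2]]; exists u, v.
case/negP: nz; apply/eqP; apply: big1 => u Gp_u; apply: big1 => v Gp_v.
case: andP => [uv_p | _]; last by rewrite mulr0.
case/negP: no_uv; apply/exists_inP; exists u => //.
by apply/exists_inP; exists v => //; apply/andP.
Qed.

Lemma Rform_coef u v : u \in Gp -> v \in Gp -> R (rleft u v, (v * xi u)%g) = r u v.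
Proof.
move=> Gp_u Gp_v; rewrite /Rform (big_only1 u) // => [|u' neq_u' Gp_u'].
  rewrite (big_only1 v) ?eqxx ?mulr1 // => v' neq_v' Gp_v'.
  case: andP => [[_ /eqP /(congr1 pl)] | _]; last by rewrite mulr0.
  by rewrite !(pl_mulg uf) ?xi_in // => eq_v; rewrite eq_v eqxx in neq_v'.
apply: big1 => v' Gp_v'; case: andP => [[/eqP /(congr1 pl)] | _]; last by rewrite mulr0.
by rewrite !pl_rleft // => eq_u; rewrite eq_u eqxx in neq_u'.
Qed.

Lemma leg13_leg23_term_supp w h v : w \in Gp -> h \in Gp -> v \in Gp ->
  forall q q', H3term (leg13 Gp R) (leg23 Gp R)
    (comul_pt (rleft (w * h) v) h, (v * xi (w * h))%g) q q' != 0 ->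
  q = ((rleft w v, h), (v * xi w)%g) /\
  q' = ((lact_p Gp Gm (eta v) w, rleft h (ract_p Gp Gm v (xi w))),
        (ract_p Gp Gm v (xi w) * xi h)%g).
Proof.
move=> Gp_w Gp_h Gp_v q q'; case: q q' => [[q11 q12] q2] [[s11 s12] s2].
case/H3term_neq0=> _ + /andP[/eqP tw1 /eqP m1] /andP[/eqP tw2 /eqP m2]
  /andP[/eqP tw3 /eqP m3] /=.
rewrite /leg13 /leg23 /Hone /= !mulf_eq0 !negb_or !boolr_neq0.
case/andP=> /andP[/Rform_neq0[u1 [v1 [Gp_u1 Gp_v1 /= e11 e2]]] Gp_q12].
case/andP=> Gp_s11 /Rform_neq0[u2 [v2 [Gp_u2 Gp_v2 /= e12 e2']]].
subst q11 q2 s12 s2; rewrite /= in tw1 m1 tw2 m2 tw3 m3.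
have Gp_wh : (w * h)%g \in Gp by rewrite groupM.
have eq_q12 : q12 = h.
  by have := congr1 pl m2; rewrite !(pl_mulGm uf) ?(mi_in uf) // !(pl_id uf).
have eq_u1 : u1 = w.
  have := congr1 pl m1; rewrite (pl_mulGm uf _ (mi_in uf _)) !pl_rleft //.
  by rewrite (pl_mulg uf) ?(lact_m_in uf) ?groupM ?groupV // mulgK.
have eq_v1 : v1 = v.
  have := congr1 pl m3; rewrite (pl_mulGm uf _ (mi_in uf _)).
  by rewrite !(pl_mulg uf) ?xi_in.
subst q12 u1 v1; rewrite twist_rleft ?(pl_id uf) // in tw1.
rewrite (twist_id uf) // pl_rleft // in tw2.
rewrite (twist_mulg uf) ?xi_in // (pl_mulg uf) ?xi_in // in tw3.
by rewrite -tw1 -tw2 -tw3.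
Qed.

Lemma leg13_leg12_term_supp u h k : u \in Gp -> h \in Gp -> k \in Gp ->
  let k0 := (k * h * xi u)%g in
  forall q q', H3term (leg13 Gp R) (leg12 Gp R)
    ((rleft u (k * h), (comul_pt k0 h).1), (comul_pt k0 h).2) q q' != 0 ->
  q = ((rleft u h, k), (h * xi u)%g) /\
  q' = ((rleft (lact_p Gp Gm (eta h) u) k, (k * xi (lact_p Gp Gm (eta h) u))%g),
        ract_p Gp Gm h (xi u)).
Proof.
move=> Gp_u Gp_h Gp_k k0 q q'; case: q q' => [[q11 q12] q2] [[s11 s12] s2].
case/H3term_neq0=> _ + /andP[/eqP tw1 /eqP m1] /andP[/eqP tw2 /eqP m2]
  /andP[/eqP tw3 /eqP m3] /=.
rewrite /leg13 /leg12 /Hone /= !mulf_eq0 !negb_or !boolr_neq0.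
case/andP=> /andP[/Rform_neq0[u1 [v1 [Gp_u1 Gp_v1 /= e11 e2]]] Gp_q12].
case/andP=> /Rform_neq0[u2 [v2 [Gp_u2 Gp_v2 /= e11' e12']]] Gp_s2.
subst q11 q2 s11 s12; rewrite /= in tw1 m1 tw2 m2 tw3 m3.
have Gp_kh : (k * h)%g \in Gp by rewrite groupM.
have pl_k0 : pl k0 = (k * h)%g by rewrite (pl_mulg uf) ?xi_in.
have eq_u1 : u1 = u.
  by have := congr1 pl m1; rewrite (pl_mulGm uf _ (mi_in uf _)) !pl_rleft.
have eq_q12 : q12 = k.
  have := congr1 pl m2; rewrite (pl_mulGm uf _ (mi_in uf _)) (pl_id uf) //.
  by rewrite (pl_mulg uf) ?(lact_m_in uf) ?groupM ?groupV ?pl_k0 // mulgK.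
have eq_v1 : v1 = h.
  have := congr1 pl m3; rewrite (mi_id uf) // mulg1 !(pl_mulg uf) ?xi_in //.
  exact: (mi_in uf).
subst q12 u1 v1; rewrite twist_rleft // pl_rleft // in tw1.
rewrite (twist_id uf) // (pl_mulg uf) ?xi_in // in tw2.
rewrite (twist_mulg uf) ?xi_in // (pl_id uf) // in tw3.
by rewrite tw1 -tw2 -tw3.
Qed.

Hypothesis r_gt0 : {in Gp &, forall u v, 0 < r u v}.
Hypothesis R_comul_l : comul_id Gp Gm R = H3mul Gp Gm (leg13 Gp R) (leg23 Gp R).
Hypothesis R_comul_r : id_comul Gp Gm R = H3mul Gp Gm (leg13 Gp R) (leg12 Gp R).

Lemma r_mull w h v : w \in Gp -> h \in Gp -> v \in Gp ->
  r (w * h)%g v = r w v * r h (ract_p Gp Gm v (xi w)).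
Proof.
move=> Gp_w Gp_h Gp_v.
have Gp_wh : (w * h)%g \in Gp by rewrite groupM.
have := congr1 (@^~ (comul_pt (rleft (w * h) v) h, (v * xi (w * h))%g)) R_comul_l.
rewrite comul_id_comul_pt // Rform_coef //.
rewrite (H3mul_only1 (leg13_leg23_term_supp Gp_w Gp_h Gp_v)).
move=> eq_r; have := lt0r_neq0 (r_gt0 Gp_wh Gp_v).
rewrite eq_r => /H3term_neq0[-> _ _ _ _].
rewrite /leg13 /leg23 /Hone /= Gp_h (pl_in uf) !Rform_coef ?(ract_p_in uf) //.
by rewrite mulr1 mul1r.
Qed.

Lemma r_mulr u h k : u \in Gp -> h \in Gp -> k \in Gp ->
  r u (k * h)%g = r u h * r (lact_p Gp Gm (eta h) u) k.
Proof.
move=> Gp_u Gp_h Gp_k.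
have Gp_kh : (k * h)%g \in Gp by rewrite groupM.
pose k0 := (k * h * xi u)%g.
have := congr1 (@^~ ((rleft u (k * h), (comul_pt k0 h).1), (comul_pt k0 h).2)) R_comul_r.
rewrite id_comul_comul_pt // Rform_coef //.
rewrite (H3mul_only1 (leg13_leg12_term_supp Gp_u Gp_h Gp_k)).
move=> eq_r; have := lt0r_neq0 (r_gt0 Gp_u Gp_kh).
rewrite eq_r => /H3term_neq0[-> _ _ _ _].
rewrite /leg13 /leg12 /Hone /= Gp_k (ract_p_in uf) !Rform_coef ?(pl_in uf) //.
by rewrite !mulr1.
Qed.

Definition rcol v := \prod_(u in Gp) r u v.

Lemma rcol_eq1 : {in Gp, forall v, rcol v = 1}.
Proof.
apply: pos_morph_eq1 => [v Gp_v | k h Gp_k Gp_h].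
  by apply: prodr_gt0 => u Gp_u; apply: r_gt0.
rewrite /rcol (eq_bigr _ (fun u Gp_u => r_mulr Gp_u Gp_h Gp_k)) big_split mulrC /=.
congr (_ * _); symmetry; apply: reindex_in_inj => [u _ | ]; first exact: (pl_in uf).
exact: (lact_p_inj uf).
Qed.

Lemma r_eq1 : {in Gp &, forall w v, r w v = 1}.
Proof.
move=> w v Gp_w Gp_v; apply/eqP.
rewrite -(pexpr_eq1 (cardG_gt0 Gp)) ?ltW ?r_gt0 //; apply/eqP.
have : rcol v = \prod_(h in Gp) r (w * h)%g v.
  apply: reindex_in_inj => [h Gp_h | ]; first by rewrite groupM.
  by apply: in2W; apply: mulgI.
rewrite (eq_bigr _ (fun h Gp_h => r_mull Gp_w Gp_h Gp_v)) big_split /=.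
by rewrite prodr_const -/(rcol _) !rcol_eq1 ?(ract_p_in uf) // mulr1 => /esym.
Qed.

End Coefficients.

Theorem proposition5 (gT : finGroupType) (C : numClosedFieldType)
    (Gp Gm : {group gT}) (xi eta : gT -> gT) (r : gT -> gT -> C) :
  unique_factorization Gp Gm ->
  {in Gp, forall u, xi u \in Gm} ->
  {in Gp, forall u, eta u \in Gm} ->
  {in Gp &, forall u v, 0 < r u v} ->
  quasi_triangular Gp Gm (Rform Gp Gm xi eta r) ->
  positive2 (Rform Gp Gm xi eta r) ->
  {in Gp &, forall u v, r u v = 1}.
Proof.
move=> uf xi_in eta_in r_gt0 [_ _ R_comul_l R_comul_r _] _.
exact: (r_eq1 uf xi_in eta_in r_gt0 R_comul_l R_comul_r).
Qed.
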